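(* Let $n\ge 2$ and let $q$ be generic. Regard ${\mathbb{C}}^n$ as the fundamental ($n$-dimensional, highest weight $\omega_1$) module of $U_q(sl_n)$. Then its braided zeta function is \[\zeta_t({\mathbb{C}}^n)=\prod_{\substack{j=-(n-1)\\ \text{step } 2}}^{n-1}\frac{1}{1-q^jt},\] i.e. the product of $1/(1-q^jt)$ over $j\in\{-(n-1),-(n-3),\dots,n-3,n-1\}$.
   Context: Throughout, $q\in{\mathbb{C}}$ is generic (not a root of unity) and $(m)_q=(q^m-q^{-m})/(q-q^{-1})$ denotes the symmetric $q$-integer. For a complex simple Lie algebra $g$, finite-dimensional highest weight modules of the Drinfeld–Jimbo quantum group $U_q(g)$ form a ribbon braided category; for generic $q$ tensor products and decompositions into irreducibles follow the same pattern as classically. The multiplicative braided dimension (braided trace of the ribbon element) of the irreducible module $V(\Lambda)$ of highest weight $\Lambda$ is $\underline{\dim}'(V(\Lambda))=\prod_{\alpha>0}\frac{((\alpha,\Lambda+\rho))_q}{((\alpha,\rho))_q}$ (product over positive roots, $\rho$ the half-sum of positive roots, roots normalised with $(\alpha_i,\alpha_i)=2$), extended additively to direct sums. For an object $A$, $A^{(j)}\subseteq A^{\otimes j}$ denotes the subspace invariant under the $q$-Hecke algebra generated by (suitably normalised) braidings of adjacent tensor factors; for generic $q$ it is a $U_q(g)$-module with the same decomposition into irreducibles as the classical symmetric power $S^j(A)$ of the corresponding $g$-module. The braided zeta function is $\zeta_t(A)=\sum_{j\ge0}t^j\,\underline{\dim}'(A^{(j)})$. *)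

From HB Require Import structures.
From mathcomp Require Import all_boot all_order all_algebra.
Set Implicit Arguments. Unset Strict Implicit. Unset Printing Implicit Defensive.
Import Order.TTheory GRing.Theory Num.Theory.
Local Open Scope ring_scope.

Definition qint (C : fieldType) (q : C) (m : int) : C :=
  (q ^ m - q ^ (- m)) / (q - q^-1).

(* Dominant weights of sl_n given by their Dynkin labels:
   L k = label at simple root alpha_{k+1}, k = 0 .. n-2 (other values unused). *)
Definition weight := nat -> nat.

Definition rho_w : weight := fun _ => 1%N.

(* For the positive root alpha_{ab} = alpha_a + ... + alpha_{b-1} (0 <= a < b <= n-1,
   indices shifted to start at 0), with (alpha_i, alpha_i) = 2 and fundamental
   weights dual to simple coroots: (alpha_{ab}, L) = sum_{a <= k < b} L k. *)
Definition pair_root (a b : nat) (L : weight) : nat := (\sum_(a <= k < b) L k)%N.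

Definition wplus (L M : weight) : weight := fun k => (L k + M k)%N.

Definition bdim_irr (C : fieldType) (n : nat) (q : C) (L : weight) : C :=
  \prod_(a < n) \prod_(b < n | (a < b)%N)
     (qint q (pair_root a b (wplus L rho_w))%:Z / qint q (pair_root a b rho_w)%:Z).

(* A finite-dimensional module, up to isomorphism, is recorded by its
   decomposition into irreducibles: a multiset (seq) of dominant weights.
   The braided dimension is extended additively. *)
Definition bdim (C : fieldType) (n : nat) (q : C) (A : seq weight) : C :=
  \sum_(L <- A) bdim_irr n q L.

Definition mult_omega1 (j : nat) : weight := fun k => if k == 0%N then j else 0%N.

Definition fund_module : seq weight := [:: mult_omega1 1].

(* A^{(j)} for A = C^n: it has the decomposition of the classical symmetric power
   S^j(C^n), which is the irreducible V(j omega_1). *)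
Definition fund_sympow (j : nat) : seq weight := [:: mult_omega1 j].

Definition braided_zeta (C : fieldType) (n : nat) (q : C)
  (Apow : nat -> seq weight) : nat -> C := fun j => bdim n q (Apow j).

Definition series_mul_poly (C : fieldType) (f : nat -> C) (p : {poly C}) : nat -> C :=
  fun k => \sum_(i < k.+1) f i * p`_(k - i).

(* "q is generic": nonzero and not a root of unity. *)
Definition generic_q (C : fieldType) (q : C) : Prop :=
  q != 0 /\ forall k : nat, (0 < k)%N -> q ^+ k != 1.

From HB Require Import structures.
From mathcomp Require Import all_boot all_order all_algebra.
From mathcomp Require Import ring.
Import Order.TTheory GRing.Theory Num.Theory.
Set Implicit Arguments. Unset Strict Implicit.
Local Open Scope ring_scope.

(* Only the pairings with roots alpha_{0b} see the weight j omega_1, so with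
   Q = q^-2 the braided dimension of A^(j) = V(j omega_1) is
   (q^(n-1))^j times the Gaussian binomial [n-1+j, j]_Q.  The q-Pascal rule
   [m+1+j+1, j+1] - Q^(m+1) [m+1+j, j] = [m+j+1, j+1] shows by induction on m
   that sum_j [m+j, j]_Q t^j * prod_(i <= m) (1 - Q^i t) = 1, and substituting
   q^(n-1) t for t gives the product over the weights q^(n-1-2i). *)

Section SeriesMulPoly.
Variable C : fieldType.
Implicit Types (f g : nat -> C) (p r : {poly C}) (c s : C).

Lemma coef_one_subZX c l :
  (1 - c *: 'X)`_l = if l == 0%N then 1 else if l == 1%N then - c else 0.
Proof.
rewrite coefB coef1 coefZ coefX.
by case: l => [|[|l]] /=; rewrite ?mulr0 ?mulr1 ?subr0 ?sub0r.
Qed.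

Lemma series_mul_poly_one_subZX f c k :
  series_mul_poly f (1 - c *: 'X) k = f k - (if k is k'.+1 then c * f k' else 0).
Proof.
rewrite /series_mul_poly; case: k => [|k].
  by rewrite big_ord1 coef_one_subZX /= mulr1 subr0.
rewrite big_ord_recr big_ord_recr /= !coef_one_subZX subnn subSnn /=.
rewrite big1 ?add0r; first by rewrite mulr1 mulrN addrC mulrC.
move=> i _; rewrite coef_one_subZX.
have : (1 < k.+1 - i)%N by rewrite subSn ?ltnS ?subn_gt0 // ltnW.
by case: (k.+1 - i)%N => [|[|l]] //= _; rewrite mulr0.
Qed.

Lemma eq_series_mul_poly f g p :
  f =1 g -> series_mul_poly f p =1 series_mul_poly g p.
Proof. by move=> eq_fg k; apply: eq_bigr => i _; rewrite eq_fg. Qed.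

Lemma series_mul_polyE f p k :
  series_mul_poly f p k = ((\poly_(i < k.+1) f i) * p)`_k.
Proof. by rewrite coefM; apply: eq_bigr => i _; rewrite coef_poly ltn_ord. Qed.

Lemma series_mul_polyM f p r k :
  series_mul_poly (series_mul_poly f p) r k = series_mul_poly f (p * r) k.
Proof.
rewrite [RHS]series_mul_polyE mulrA coefM /series_mul_poly.
apply: eq_bigr => i _; congr (_ * _).
rewrite coefM; apply: eq_bigr => j _; rewrite coef_poly.
by rewrite (leq_ltn_trans _ (ltn_ord i)) // -ltnS.
Qed.

(* Substituting s t for t: both the series and the polynomial are dilated. *)
Lemma series_mul_poly_dilate f s p r k :
  (forall l, p`_l = s ^+ l * r`_l) ->
  series_mul_poly (fun j => s ^+ j * f j) p k = s ^+ k * series_mul_poly f r k.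
Proof.
move=> p_dil; rewrite /series_mul_poly mulr_sumr; apply: eq_bigr => i _.
have le_ik : (i <= k)%N by rewrite -ltnS ltn_ord.
have -> : s ^+ k = s ^+ i * s ^+ (k - i) by rewrite -exprD subnKC.
by rewrite p_dil; ring.
Qed.

Lemma coef_prod_one_subZX_dilate m s (c : nat -> C) l :
  (\prod_(i < m) (1 - (s * c i) *: 'X))`_l
  = s ^+ l * (\prod_(i < m) (1 - c i *: 'X))`_l.
Proof.
move: l; apply: (big_ind2 (fun p r : {poly C} => forall l, p`_l = s ^+ l * r`_l)).
- by move=> [|l]; rewrite coef1 /= ?expr0 ?mul1r ?mulr0.
- move=> p1 p2 r1 r2 dil1 dil2 l; rewrite !coefM mulr_sumr.
  apply: eq_bigr => i _; have le_il : (i <= l)%N by rewrite -ltnS ltn_ord.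
  have -> : s ^+ l = s ^+ i * s ^+ (l - i) by rewrite -exprD subnKC.
  by rewrite dil1 dil2; ring.
- move=> i _ [|[|l]]; rewrite !coef_one_subZX /=;
    by rewrite ?expr0 ?mul1r ?expr1 ?mulrN ?mulr0.
Qed.

End SeriesMulPoly.

Section GaussianBinomial.
Variables (C : fieldType) (Q : C).
Hypothesis Q_not_root1 : forall k, (0 < k)%N -> Q ^+ k != 1.

(* The Gaussian binomial [m + j, j]_Q. *)
Definition qbinom (m j : nat) : C :=
  \prod_(b < m) ((Q ^+ (b.+1 + j) - 1) / (Q ^+ b.+1 - 1)).

Lemma qbinom0r m : qbinom m 0 = 1.
Proof.
by apply: big1 => b _; rewrite addn0 divff // subr_eq0 Q_not_root1.
Qed.

Lemma qbinom_pascal m j :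
  qbinom m.+1 j.+1 - Q ^+ m.+1 * qbinom m.+1 j = qbinom m j.+1.
Proof.
rewrite /qbinom !prodf_div.
rewrite (big_ord_recr m (fun b : 'I_m.+1 => Q ^+ (b.+1 + j.+1) - 1)) /=.
rewrite (big_ord_recl m (fun b : 'I_m.+1 => Q ^+ (b.+1 + j) - 1)) /=.
rewrite (big_ord_recr m (fun b : 'I_m.+1 => Q ^+ b.+1 - 1)) /=.
under [\prod_(i < m) (Q ^+ (_ + j) - 1)]eq_bigr do rewrite /bump /= add1n addSnnS.
set A := \prod_(i < m) (Q ^+ (i.+1 + j.+1) - 1).
set D := \prod_(i < m) (Q ^+ i.+1 - 1).
have D_neq0 : D != 0 by apply/prodf_neq0 => i _; rewrite subr_eq0 Q_not_root1.
have Qm_neq0 : Q ^+ m.+1 - 1 != 0 by rewrite subr_eq0 Q_not_root1.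
by rewrite exprD add1n; field; rewrite D_neq0 Qm_neq0.
Qed.

Lemma qbinom_series m k :
  series_mul_poly (qbinom m) (\prod_(i < m.+1) (1 - Q ^+ i *: 'X)) k
  = (k == 0%N)%:R.
Proof.
elim: m k => [|m IHm] k.
  rewrite big_ord1 series_mul_poly_one_subZX /qbinom !big_ord0.
  by case: k => [|k]; rewrite /= ?subr0 // big_ord0 expr0 mulr1 subrr.
rewrite big_ord_recr /= mulrC -series_mul_polyM -(IHm k).
apply: eq_series_mul_poly => -[|j]; rewrite series_mul_poly_one_subZX.
  by rewrite subr0 !qbinom0r.
exact: qbinom_pascal.
Qed.

End GaussianBinomial.

Section GenericQ.
Variables (C : fieldType) (q : C).
Hypothesis q_generic : generic_q q.

Let q_neq0 : q != 0. Proof. by case: q_generic. Qed.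

Lemma generic_q_invX2 k : (0 < k)%N -> (q^-1 ^+ 2) ^+ k != 1.
Proof.
move=> k_gt0; rewrite -exprM exprVn invr_eq1.
by apply: q_generic.2; rewrite muln_gt0.
Qed.

Lemma subr_invr_neq0 : q - q^-1 != 0.
Proof.
apply/eqP => /subr0_eq q_eq_qV; move: (q_generic.2 2%N isT).
by rewrite expr2 {1}q_eq_qV mulVf ?eqxx.
Qed.

Lemma qint_natE (k : nat) :
  qint q k%:Z = q ^+ k * (1 - (q^-1 ^+ 2) ^+ k) / (q - q^-1).
Proof.
rewrite /qint -exprnN -exprnP -exprM mulnC exprM exprVn.
have qk_neq0 : q ^+ k != 0 by rewrite expf_neq0.
by congr (_ / _); field.
Qed.

Lemma qint_nat_neq0 (k : nat) : (0 < k)%N -> qint q k%:Z != 0.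
Proof.
move=> k_gt0; rewrite qint_natE !mulf_neq0 ?expf_neq0 ?invr_eq0 ?subr_invr_neq0 //.
by rewrite subr_eq0 eq_sym generic_q_invX2.
Qed.

Lemma expfz_sub_double (m i : nat) :
  q ^ (m%:Z - (2 * i)%:Z) = q ^+ m * (q^-1 ^+ 2) ^+ i.
Proof.
by rewrite expfzDr // -exprnN -exprnP exprM exprVn -!exprVn exprAC.
Qed.

End GenericQ.

Lemma pair_root_rho a b : pair_root a b rho_w = (b - a)%N.
Proof. by rewrite /pair_root sum_nat_const_nat muln1. Qed.

Lemma pair_root0_omega1 j b :
  pair_root 0 b.+1 (wplus (mult_omega1 j) rho_w) = (b.+1 + j)%N.
Proof.
rewrite /pair_root big_nat_recl // /wplus /mult_omega1 /=.
under eq_bigr do rewrite add0n.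
by rewrite sum_nat_const_nat muln1 subn0 addn1 addnC addSnnS.
Qed.

Lemma pair_rootS_omega1 j a b :
  pair_root a.+1 b (wplus (mult_omega1 j) rho_w) = (b - a.+1)%N.
Proof.
by rewrite -pair_root_rho; apply: eq_big_nat => -[|k].
Qed.

Lemma bdim_irr_mult_omega1 (C : fieldType) (q : C) m j : generic_q q ->
  bdim_irr m.+1 q (mult_omega1 j) = (q ^+ m) ^+ j * qbinom (q^-1 ^+ 2) m j.
Proof.
move=> q_gen; have q_neq0 : q != 0 by case: q_gen.
rewrite /bdim_irr big_ord_recl /=.
rewrite [X in _ * X]big1 ?mulr1; last first.
  move=> a _; apply: big1 => b lt_ab.
  by rewrite pair_rootS_omega1 pair_root_rho divff // qint_nat_neq0 // subn_gt0.
rewrite big_mkcond big_ord_recl /= mul1r /qbinom -exprM mulnC exprM.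
rewrite -[in q ^+ j ^+ m](card_ord m) -prodr_const -big_split /=.
apply: eq_bigr => b _; rewrite /bump /= add1n.
rewrite pair_root0_omega1 pair_root_rho subn0 !qint_natE //.
have Q_neq1 := generic_q_invX2 q_gen.
have num_neq0 : 1 - (q^-1 ^+ 2) ^+ b.+1 != 0 by rewrite subr_eq0 eq_sym Q_neq1.
have den_neq0 : (q^-1 ^+ 2) ^+ b.+1 - 1 != 0 by rewrite subr_eq0 Q_neq1.
rewrite !exprD; field.
by rewrite num_neq0 den_neq0 q_neq0 subr_eq0 -expr2 (q_gen.2 2%N isT) expf_neq0.
Qed.

Theorem proposition4p1 (C : numClosedFieldType) (n : nat) (q : C) :
  (2 <= n)%N -> generic_q q ->
  forall k : nat,
    series_mul_poly (braided_zeta n q fund_sympow)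
      (\prod_(i < n) (1 - (q ^ ((n.-1)%:Z - (2 * i)%:Z)) *: 'X)) k
    = (k == 0%N)%:R.
Proof.
case: n => [|m] // _ q_gen k /=.
have zetaE : braided_zeta m.+1 q fund_sympow
    =1 (fun j => (q ^+ m) ^+ j * qbinom (q^-1 ^+ 2) m j).
  by move=> j; rewrite /braided_zeta /bdim big_seq1 bdim_irr_mult_omega1.
rewrite (eq_series_mul_poly _ zetaE).
under eq_bigr do rewrite expfz_sub_double //.
rewrite (series_mul_poly_dilate _ _ (coef_prod_one_subZX_dilate _ _ _)).
rewrite qbinom_series; last exact: generic_q_invX2.
by case: k => [|k]; rewrite ?expr0 ?mul1r ?mulr0.
Qed.
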